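(* Let $k\in\mathbb{Z}$. For every $n\in\mathbb{N}=\{1,2,\dots\}$, $$E_{n-1}^{(k)}(x)=\frac{1}{n}\sum_{j=1}^{n}\sum_{m=1}^{j}\binom{n}{j}\frac{S_{1}(j,m)}{m^{k-1}}E_{n-j}(x).$$
   Context: Euler polynomials $E_n(x)$ are defined by $\frac{2}{e^t+1}e^{xt}=\sum_{n=0}^{\infty}E_n(x)\frac{t^n}{n!}$. For $k\in\mathbb{Z}$, $\mathrm{Ei}_k(x)=\sum_{n=1}^{\infty}\frac{x^n}{n^k(n-1)!}$; the poly-Genocchi polynomials $G_n^{(k)}(x)$ are defined by $\frac{2\,\mathrm{Ei}_k(\log(1+t))}{e^t+1}e^{xt}=\sum_{n=0}^{\infty}G_n^{(k)}(x)\frac{t^n}{n!}$, and the poly-Euler polynomials are $E_n^{(k)}(x)=\frac{G_{n+1}^{(k)}(x)}{n+1}$ ($n\ge0$). $S_1(n,m)$ are the signed Stirling numbers of the first kind: $\frac{(\log(1+t))^m}{m!}=\sum_{n=m}^{\infty}S_1(n,m)\frac{t^n}{n!}$. *)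

(* Formal power series in t over a numFieldType R are
   represented by their coefficient sequences  nat -> R. *)
From HB Require Import structures.
From mathcomp Require Import all_boot all_order all_algebra.
Set Implicit Arguments. Unset Strict Implicit. Unset Printing Implicit Defensive.
Import Order.TTheory GRing.Theory Num.Theory.
Local Open Scope ring_scope.

Section Series.
Variable R : numFieldType.

Definition series := nat -> R.

Definition sone : series := fun n => if n == 0%N then 1 else 0.
Definition smul (f g : series) : series :=
  fun n => \sum_(i < n.+1) f i * g (n - i)%N.
Definition sadd (f g : series) : series := fun n => f n + g n.
Definition sscale (c : R) (f : series) : series := fun n => c * f n.
Definition spow (f : series) (m : nat) : series := iter m (smul f) sone.

(* multiplicative inverse of a series (f 0 <> 0): list of coefficients 0..n *)
Fixpoint sinv_seq (f : series) (n : nat) : seq R :=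
  match n with
  | 0%N => [:: (f 0%N)^-1]
  | n'.+1 => let s := sinv_seq f n' in
      rcons s (- (f 0%N)^-1 * \sum_(i < n'.+1) f i.+1 * nth 0 s (n' - i)%N)
  end.
Definition sinv (f : series) : series := fun n => nth 0 (sinv_seq f n) n.

(* composition a(g(t)) for g with g 0 = 0 *)
Definition scomp (a g : series) : series :=
  fun N => \sum_(n < N.+1) a n * spow g n N.

Definition sexp (x : R) : series := fun n => x ^+ n / (n`!)%:R.
Definition slog1p : series :=
  fun n => if n == 0%N then 0 else (-1) ^+ n.-1 / n%:R.
Definition sEi (k : int) : series :=
  fun n => if n == 0%N then 0 else ((n%:R ^ k) * (n.-1`!)%:R)^-1.

Definition s2_over_et1 : series := sscale 2 (sinv (sadd (sexp 1) sone)).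

Definition Euler (n : nat) (x : R) : R :=
  (n`!)%:R * smul s2_over_et1 (sexp x) n.

Definition polyGenocchi (k : int) (n : nat) (x : R) : R :=
  (n`!)%:R * smul (smul (scomp (sEi k) slog1p) s2_over_et1) (sexp x) n.

Definition polyEuler (k : int) (n : nat) (x : R) : R :=
  polyGenocchi k n.+1 x / (n.+1)%:R.

Definition S1 (n m : nat) : R := (n`!)%:R / (m`!)%:R * spow slog1p m n.

End Series.

(** Multiply out the generating function of G_{n}^{(k)} as the product of
    Ei_k(log(1+t)) and 2 e^{xt}/(e^t+1).  Both factors are exponential
    generating functions, so the coefficients combine by a binomial
    convolution; the second one has coefficients E_{n-j}(x), and expanding
    Ei_k(log(1+t)) = sum_m (log(1+t))^m / (m^k (m-1)!) gives the coefficients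
    sum_m S_1(j,m) / m^(k-1) of t^j/j!. *)
From HB Require Import structures.
From mathcomp Require Import all_boot all_order all_algebra.
From mathcomp Require Import ring.
Import Order.TTheory GRing.Theory Num.Theory.
Local Open Scope ring_scope.

Section SeriesProduct.
Variable R : numFieldType.
Implicit Types (f g h : series R) (p q : {poly R}).

Lemma coefM_smul f g p q n :
  (forall i, (i <= n)%N -> p`_i = f i) -> (forall i, (i <= n)%N -> q`_i = g i) ->
  (p * q)`_n = smul f g n.
Proof.
move=> pf qg; rewrite coefM /smul; apply: eq_bigr => i _.
by rewrite pf ?qg ?leq_subr // -ltnS.
Qed.

(* Coefficients up to n only depend on truncations, so associativity is
   inherited from polynomials of degree at most n. *)
Lemma smulA f g h n : smul (smul f g) h n = smul f (smul g h) n.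
Proof.
pose P u := \poly_(i < n.+1) u i : {poly R}.
have PE u i : (i <= n)%N -> (P u)`_i = u i by move=> le_in; rewrite coef_poly ltnS le_in.
have PME u v i : (i <= n)%N -> (P u * P v)`_i = smul u v i.
  by move=> le_in; apply: coefM_smul => j le_ji; apply: PE; apply: leq_trans le_in.
rewrite -(@coefM_smul (smul f g) h (P f * P g) (P h)); [|exact: PME|exact: PE].
by rewrite -mulrA (@coefM_smul f (smul g h)); [|exact: PE|exact: PME].
Qed.

Lemma fact_smul f g n :
  (n`!)%:R * smul f g n =
  \sum_(i < n.+1) 'C(n, i)%:R * ((i`!)%:R * f i) * (((n - i)`!)%:R * g (n - i)%N).
Proof.
rewrite /smul mulr_sumr; apply: eq_bigr => [[i le_in]] _ /=.
by rewrite -(bin_fact (ltnSE le_in)) !natrM; ring.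
Qed.

End SeriesProduct.

Lemma fact_scomp_sEi_slog1p (R : numFieldType) (k : int) (j : nat) :
  (j`!)%:R * scomp (sEi R k) (slog1p R) j =
  \sum_(1 <= m < j.+1) S1 R j m / (m%:R ^ (k - 1)).
Proof.
rewrite /scomp big_ord_recl /= {1}/sEi /= mul0r add0r mulr_sumr.
rewrite [RHS]big_add1 big_mkord; apply: eq_bigr => [[m _]] _ /=.
rewrite /sEi /S1 /= /bump /= add1n.
have m1_neq0 : (m.+1%:R : R) != 0 by rewrite pnatr_eq0.
have mfact_neq0 : ((m`!)%:R : R) != 0 by rewrite pnatr_eq0 -lt0n fact_gt0.
have powk_neq0 : (m.+1%:R : R) ^ (k - 1) != 0 by rewrite expfz_eq0 negb_and m1_neq0 orbT.
have -> : (m.+1%:R : R) ^ k = m.+1%:R ^ (k - 1) * m.+1%:R.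
  by rewrite -[in LHS](subrK 1 k) expfzDr // expr1z.
rewrite factS natrM add0n; field.
by rewrite powk_neq0 mfact_neq0 addrC natr1.
Qed.

Lemma polyGenocchiE (R : numFieldType) (k : int) (n : nat) (x : R) :
  polyGenocchi k n x =
  \sum_(j < n.+1) 'C(n, j)%:R *
    (\sum_(1 <= m < j.+1) S1 R j m / (m%:R ^ (k - 1))) * Euler (n - j) x.
Proof.
rewrite /polyGenocchi smulA fact_smul.
by apply: eq_bigr => j _; rewrite fact_scomp_sEi_slog1p.
Qed.

Theorem theorem3 (R : numFieldType) (k : int) (n : nat) (x : R) :
  (1 <= n)%N ->
  polyEuler k n.-1 x =
    (n%:R)^-1 * \sum_(1 <= j < n.+1) \sum_(1 <= m < j.+1)
      'C(n, j)%:R * S1 R j m / (m%:R ^ (k - 1)) * Euler (n - j) x.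
Proof.
case: n => [//|n] _ /=.
rewrite /polyEuler polyGenocchiE mulrC; congr (_ * _).
rewrite big_ord_recl [in X in X + _ = _]big_geq // mulr0 mul0r add0r.
rewrite [RHS]big_add1 big_mkord; apply: eq_bigr => j _.
by rewrite mulr_sumr mulr_suml; apply: eq_bigr => m _; rewrite !mulrA.
Qed.
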